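(* Let $G=(V,E)$ be a control flow graph and $p$ a predicate node. All successors of $p$ in $A_p$ belong to the same strongly connected component of $A_p$.
   Context: A control flow graph (CFG) is a finite directed graph $G=(V,E)$ in which every node has at most two outgoing edges; nodes with exactly two outgoing edges are predicate nodes. A path from $n_1$ is a nonempty finite or infinite sequence of nodes with each adjacent pair an edge; it is maximal if it is infinite or its last node has no successor. $V_p$ is the set of nodes occurring on all maximal paths from $p$ in $G$. For $V'\subseteq V$, a $V'$-interval from $x$ to $y$ is a finite path $n_1\ldots n_k$ in $G$ with $k\ge 2$, $n_1=x\in V'$, $n_k=y\in V'$, and $n_i\notin V'$ for $1<i<k$. $A_p$ is the directed graph with node set $V_p$ and an edge $(x,y)$ iff there is a $V_p$-interval from $x$ to $y$ in $G$. *)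

From mathcomp Require Import all_boot.
From Stdlib Require Import Relations.
Set Implicit Arguments. Unset Strict Implicit. Unset Printing Implicit Defensive.

Section CFG.
Variables (V : finType) (e : rel V).

Definition is_cfg : Prop := forall x : V, #|[set y | e x y]| <= 2.

Definition predicate_node (p : V) : Prop := #|[set y | e p y]| = 2.

(* A finite path from p is p :: s with path e p s; it is maximal iff its
   last node has no successor. *)
Definition max_finite_path (p : V) (s : seq V) : Prop :=
  path e p s /\ forall y, ~~ e (last p s) y.

(* An infinite path from p (infinite paths are always maximal). *)
Definition infinite_path (p : V) (f : nat -> V) : Prop :=
  f 0 = p /\ forall i, e (f i) (f i.+1).

Definition Vp (p x : V) : Prop :=
  (forall s, max_finite_path p s -> x \in p :: s) /\
  (forall f, infinite_path p f -> exists i, f i = x).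

Definition interval (W : V -> Prop) (x y : V) : Prop :=
  W x /\ W y /\
  exists s : seq V, path e x (rcons s y) /\ (forall n, n \in s -> ~ W n).

Definition Ap_edge (p x y : V) : Prop := Vp p x /\ Vp p y /\ interval (Vp p) x y.

Definition Ap_same_scc (p x y : V) : Prop :=
  Vp p x /\ Vp p y /\
  clos_refl_trans V (Ap_edge p) x y /\ clos_refl_trans V (Ap_edge p) y x.

End CFG.

(* A V_p-interval p ... y extends, by appending a greedy walk, to a maximal
   path from p, so every node t <> p of V_p occurs on it at or after y; the
   consecutive V_p nodes on the segment from y to t are joined by V_p-intervals,
   i.e. by edges of A_p, so y reaches t in A_p.  If instead the interval returns
   to p, repeating it forever gives an infinite path whose only V_p node is p,
   so V_p = {p}. *)
From Stdlib Require Import Relations Classical.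
From mathcomp Require Import all_boot.

Set Implicit Arguments. Unset Strict Implicit. Unset Printing Implicit Defensive.

Section GreedyWalk.
Variables (V : finType) (e : rel V).

Definition greedy_step (x : V) : V := odflt x [pick y | e x y].

Lemma greedy_step_sink x : ~~ e x (greedy_step x) -> forall y, ~~ e x y.
Proof. by rewrite /greedy_step; case: pickP => [y -> //|none _ y]; rewrite none. Qed.

Lemma connect_greedy_step x : connect e x (greedy_step x).
Proof. by rewrite /greedy_step; case: pickP => [y /connect1|_] //=; apply: connect0. Qed.

Lemma connect_iter_greedy_step n x : connect e x (iter n greedy_step x).
Proof.
elim: n => [|n IH]; first exact: connect0.
exact: connect_trans IH (connect_greedy_step _).
Qed.

Lemma path_greedy_traject x m :
  (forall j, j < m -> e (iter j greedy_step x) (iter j.+1 greedy_step x)) ->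
  path e x (traject greedy_step (greedy_step x) m).
Proof.
elim: m x => [//|m IH] x edges /=.
rewrite (edges 0) // IH // => j lt_jm.
by rewrite -!iterSr; apply: edges.
Qed.

Lemma infinite_path_cat p s g : path e p s -> infinite_path e (last p s) g ->
  infinite_path e p (fun n => if n <= size s then nth p (p :: s) n else g (n - size s)).
Proof.
move=> /(pathP p) ps [g0 gS]; split=> // n.
case: (ltngtP n (size s)) => [lt_ns | gt_ns | ->].
- exact: ps.
- by rewrite subSn ?(ltnW gt_ns).
- by rewrite subSnn -[size s]/((size (p :: s)).-1) nth_last /= -g0.
Qed.

End GreedyWalk.

Section MaximalPaths.
Variables (V : finType) (e : rel V).

Lemma Vp_mem_cycle p c t : cycle e (p :: c) -> Vp e p t -> t \in p :: c.
Proof.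
move=> cyc [_ Vinf]; pose f n := iter n (next (p :: c)) p.
have f_on_cycle n : f n \in p :: c.
  by elim: n => [|n IH]; rewrite /f ?mem_head // iterS mem_next.
have [|i <-] := Vinf f; last exact: f_on_cycle.
by split=> // n; apply: next_cycle.
Qed.

Lemma Vp_mem_path_or_connect p s t :
  path e p s -> Vp e p t -> t \in p :: s \/ connect e (last p s) t.
Proof.
move=> ps [Vfin Vinf]; set x := last p s; pose g n := iter n (greedy_step e) x.
case: (classic (forall n, e (g n) (g n.+1))) => [edges | /not_all_ex_not[m stuck]].
  have [i <-] := Vinf _ (infinite_path_cat ps (conj erefl edges)).
  case: leqP => [le_is | _]; first by left; apply: mem_nth.
  by right; apply: connect_iter_greedy_step.
have ex_stuck : exists n, ~~ e (g n) (g n.+1) by exists m; apply/negP.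
case: (ex_minnP ex_stuck) => k stuck_k min_k.
have maximal : max_finite_path e p (s ++ traject (greedy_step e) (greedy_step e x) k).
  split; last by move=> y; rewrite last_cat last_traject; apply: greedy_step_sink.
  rewrite cat_path ps path_greedy_traject // => j lt_jk.
  by apply: contraTT lt_jk; rewrite -leqNgt; apply: min_k.
move: (Vfin _ maximal); rewrite -cat_cons mem_cat => /orP[|/trajectP[i _ ->]].
  by left.
by right; rewrite -iterSr; apply: connect_iter_greedy_step.
Qed.

End MaximalPaths.

Section Ap.
Variables (V : finType) (e : rel V) (p : V).

Notation Ap_reach := (clos_refl_trans V (Ap_edge e p)).

Lemma path_Ap_reach x s u w :
  Vp e p x -> (forall n, n \in s -> ~ Vp e p n) -> path e x (s ++ u) ->
  w \in u -> Vp e p w -> Ap_reach x w.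
Proof.
elim: u x s => [//|a u IH] x s Vx s_out xsu.
move: (xsu); rewrite cat_path /= => /and3P[xs sa au].
have [Va | a_out] := classic (Vp e p a).
  have xa : Ap_reach x a.
    by apply: rt_step; do 4!split=> //; exists s; rewrite rcons_path xs sa.
  case/predU1P => [-> // | w_u] Vw; apply: (rt_trans _ _ _ a _ xa).
  by apply: (IH a [::]) => // n; rewrite in_nil.
case/predU1P => [-> /a_out [] | w_u] Vw.
apply: (IH x (rcons s a)) w_u Vw; rewrite ?cat_rcons //.
by move=> n; rewrite mem_rcons => /predU1P[-> | /s_out].
Qed.

Lemma connect_Ap_reach x w : Vp e p x -> Vp e p w -> connect e x w -> Ap_reach x w.
Proof.
move=> Vx Vw /connectP[u xu w_last]; subst w.
case/predU1P: (mem_last x u) => [-> | w_u]; first exact: rt_refl.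
by apply: (path_Ap_reach (s := [::]) Vx) w_u Vw => // n; rewrite in_nil.
Qed.

Lemma Ap_self_loop_Vp_eq t : Ap_edge e p p p -> Vp e p t -> t = p.
Proof.
case=> _ [_ [_ [_ [s [cyc s_out]]]]] Vt.
by case/predU1P: (Vp_mem_cycle cyc Vt) => // /s_out.
Qed.

Lemma Ap_succ_reach_Vp y t : Ap_edge e p p y -> Vp e p t -> t <> p -> Ap_reach y t.
Proof.
case=> _ [Vy [_ [_ [s [psy s_out]]]]] Vt tp.
move: (Vp_mem_path_or_connect psy Vt); rewrite last_rcons -rcons_cons mem_rcons.
case=> [/predU1P[-> | ] | ]; [exact: rt_refl | | exact: connect_Ap_reach].
by case/predU1P => [/tp | /s_out].
Qed.

Lemma Ap_succs_reach y z : Ap_edge e p p y -> Ap_edge e p p z -> Ap_reach y z.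
Proof.
move=> py pz; have [zp | nzp] := eqVneq z p.
  by subst z; rewrite (Ap_self_loop_Vp_eq pz (proj1 (proj2 py))); apply: rt_refl.
by apply: Ap_succ_reach_Vp py (proj1 (proj2 pz)) _; apply/eqP.
Qed.

End Ap.

Theorem lemma4p7 (V : finType) (e : rel V) (p : V) :
  is_cfg e -> predicate_node e p ->
  forall y z : V, Ap_edge e p p y -> Ap_edge e p p z -> Ap_same_scc e p y z.
Proof.
move=> _ _ y z py pz.
split; first exact: proj1 (proj2 py).
split; first exact: proj1 (proj2 pz).
by split; apply: Ap_succs_reach.
Qed.
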